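(* Let $p$ be a prime and let $\alpha_1,\dots,\alpha_k,\beta_1,\dots,\beta_k\in\overline{\mathbb{F}}_p$. Assume that for each $i\in\{1,\dots,k\}$ one of the following holds: (a) $\alpha_i-\beta_i\in\mathbb{F}_p$ and $[\alpha_i-\beta_i]\le[\alpha_j-\beta_l]$ for all $j,l\ge i$ with $\alpha_j-\beta_l\in\mathbb{F}_p$; or (b) $\alpha_j-\beta_l\notin\mathbb{F}_p$ for all $j,l\ge i$. Then the $Y(\mathfrak{gl}_2)$-module $L(\alpha_1,\beta_1,p)\otimes\dots\otimes L(\alpha_k,\beta_k,p)$ is irreducible.
   Context: For $x\in\mathbb{F}_p$, $[x]$ denotes the least nonnegative integer whose residue mod $p$ is $x$. For $\alpha,\beta\in\overline{\mathbb{F}}_p$, $L(\alpha,\beta,p)$ is the irreducible quotient of the $\mathfrak{gl}_2$-Verma module over $\overline{\mathbb{F}}_p$ generated by $v$ with $E_{11}v=\alpha v$, $E_{22}v=\beta v$, $E_{12}v=0$; it is regarded as a module over the Yangian $Y(\mathfrak{gl}_2)$ (generators $t_{ij}^{(r)}$, $t_{ij}(u)=\delta_{ij}+\sum_{r\ge1}t_{ij}^{(r)}u^{-r}$, RTT relations) via the evaluation homomorphism $t_{ij}(u)\mapsto\delta_{ij}+E_{ij}u^{-1}$. Tensor products of $Y(\mathfrak{gl}_2)$-modules are taken via the coproduct $\Delta(t_{ij}(u))=\sum_{a}t_{ia}(u)\otimes t_{aj}(u)$. *)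

From HB Require Import structures.
From mathcomp Require Import all_boot all_order all_algebra.
From mathcomp Require Import mxtens.
Set Implicit Arguments. Unset Strict Implicit. Unset Printing Implicit Defensive.
Import GRing.Theory.
Local Open Scope ring_scope.

Section Yangian.
Variable F : fieldType.

(* x lies in the prime field F_p (= image of the integers), tested via the
   residues 0..p-1 (correct when F has characteristic p). *)
Definition in_Fp (p : nat) (x : F) : bool := has (fun n : nat => n%:R == x) (iota 0 p).

Definition Fp_rep (p : nat) (x : F) : nat := find (fun n : nat => n%:R == x) (iota 0 p).

(* A representation of Y(gl_2) on F^d : the operators t_ij^{(r)} (r >= 1),
   i,j in 'I_2 (index 0 <-> 1, index 1 <-> 2), as d x d matrices acting on
   column vectors.  The value at r = 0 is irrelevant. *)
Record YRep := { ydim : nat; yop : nat -> 'I_2 -> 'I_2 -> 'M[F]_ydim }.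

Definition ytfull (V : YRep) (r : nat) (i j : 'I_2) : 'M[F]_(ydim V) :=
  if r is 0 then (i == j)%:R%:M else yop V r i j.

(* Tensor product via the coproduct
   Delta(t_ij^{(r)}) = sum_a sum_{s=0}^r t_ia^{(s)} (x) t_aj^{(r-s)}. *)
Definition ytens (V W : YRep) : YRep :=
  {| ydim := (ydim V * ydim W)%N;
     yop := fun r i j =>
       \sum_(a < 2) \sum_(s < r.+1) (ytfull V s i a *t ytfull W (r - s) a j) |}.

(* The trivial (counit) module: t_ij(u) = delta_ij on F^1. *)
Definition ytriv : YRep := {| ydim := 1%N; yop := fun _ _ _ => 0 |}.

(* Irreducible: nonzero, and every subspace (row space of U, whose rows are
   the transposed vectors) stable under all t_ij^{(r)}, r >= 1, is 0 or everything. *)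
Definition yirreducible (V : YRep) : Prop :=
  (0 < ydim V)%N /\
  forall U : 'M[F]_(ydim V),
    (forall (r : nat) (i j : 'I_2), (0 < r)%N -> (U *m (yop V r i j)^T <= U)%MS) ->
    U = 0 \/ row_full U.

(* The irreducible gl_2-module L(alpha, beta, p): basis v_0, ..., v_{d-1},
   d = [alpha - beta] + 1 if alpha - beta in F_p, d = p otherwise;
   E11 v_n = (alpha - n) v_n, E22 v_n = (beta + n) v_n, E21 v_n = v_{n+1}
   (v_d = 0), E12 v_n = n (alpha - beta - n + 1) v_{n-1}.
   Matrix entry (m, n) = coefficient of v_m in E v_n. *)
Definition Ldim (p : nat) (a b : F) : nat :=
  if in_Fp p (a - b) then (Fp_rep p (a - b)).+1 else p.

Definition glmat (d : nat) (a b : F) (i j : 'I_2) : 'M[F]_d :=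
  \matrix_(m < d, n < d)
    match val i, val j with
    | 0, 0 => if m == n then a - n%:R else 0
    | 1, 1 => if m == n then b + n%:R else 0
    | 1, 0 => if m == n.+1 :> nat then 1 else 0
    | _, _ => if n == m.+1 :> nat then n%:R * (a - b - n%:R + 1) else 0
    end.

(* Evaluation module: t_ij(u) = delta_ij + E_ij u^{-1}. *)
Definition Lmod (p : nat) (a b : F) : YRep :=
  {| ydim := Ldim p a b;
     yop := fun r i j => if r == 1%N then glmat (Ldim p a b) a b i j else 0 |}.

(* L(a_1,b_1) (x) ... (x) L(a_k,b_k) (the trailing trivial module is the
   unit for the tensor product). *)
Definition Ltensor (p k : nat) (alpha beta : 'I_k -> F) : YRep :=
  foldr ytens ytriv [seq Lmod p (alpha i) (beta i) | i <- enum 'I_k].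

End Yangian.

From HB Require Import structures.
From mathcomp Require Import all_boot all_order all_algebra.
From mathcomp Require Import mxtens.
From mathcomp Require Import zify ring.
From Stdlib Require Import Classical.
Import GRing.Theory.
Local Open Scope ring_scope.
Set Implicit Arguments. Unset Strict Implicit. Unset Printing Implicit Defensive.

(* Each factor [L(a, b)] has a basis [v_0, ..., v_(d-1)] on which [E_12] and
   [E_21] lower and raise the index, so the tensor product is graded by the
   total index, with [v_0 (x) ... (x) v_0] spanning degree 0.  Such a module is
   irreducible as soon as [v_0 (x) ... (x) v_0] is, up to scalars, the only
   vector killed by all [t_12^(r)] and its dual the only covector killed by
   all [t_21^(r)]: a nonzero submodule contains it, and then its annihilator
   is zero.
   Both uniqueness properties are proved by adding one factor [L(a, b)] in
   front of a module [W] that has them.  For a singular [w = \sum_n v_n (x) w_n]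
   the coproduct gives
     [t_12^(r+1) w_n + (a - n) t_12^(r) w_n + c_(n+1) t_22^(r) w_(n+1) = 0],
   with [c_n = n (a - b - n + 1) <> 0] for [0 < n < d] since [d <= p].  Going
   down from [n = d], each [w_n] is singular in [W], hence a multiple of its
   highest weight vector, on which [t_22(u)] acts by [prod_l (1 + b_l u^-1)];
   the generating series of the recurrence at [n - 1] then forces [w_n = 0]
   unless [a - n + 1] is one of the later [b_l].  That would make [a - b_l]
   an element of [F_p] smaller than [[a - b]] (or put [a - b_l] in [F_p] when
   [a - b] is not), which the hypothesis excludes; covectors are handled
   dually. *)

Lemma nat_down_ind (P : nat -> Prop) (d : nat) :
  (forall n, (d <= n)%N -> P n) -> (forall n, (n < d)%N -> P n.+1 -> P n) ->
  forall n, P n.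
Proof.
move=> Pbig Pstep; suff PnD t n : (d <= n + t)%N -> P n by move=> n; apply: (PnD d); lia.
elim: t n => [|t IH] n hn; first by apply: Pbig; lia.
have [/Pbig //|ltnd] := leqP d n.
by apply: Pstep ltnd (IH _ _); lia.
Qed.

Lemma pairwise_enum_ord k (r : rel 'I_k) :
  (forall i j : 'I_k, (i < j)%N -> r i j) -> pairwise r (enum 'I_k).
Proof.
move=> r_lt; apply: (@sub_pairwise _ (relpre val ltn)) r_lt _.
by rewrite -pairwise_map val_enum_ord -sorted_pairwise ?iota_ltn_sorted //; apply: ltn_trans.
Qed.

Section Generic.
Variable F : fieldType.

Lemma sum_mxtens_index m n (G : 'I_(m * n) -> F) :
  \sum_k G k = \sum_(i < m) \sum_(j < n) G (mxtens_index (i, j)).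
Proof.
rewrite pair_big /= (reindex (@mxtens_index m n)) /=; first by apply: eq_bigr => -[].
by exists (@mxtens_unindex m n) => x _; [apply: mxtens_indexK | apply: mxtens_unindexK].
Qed.

Lemma big_ord2 (G : 'I_2 -> F) : \sum_(i < 2) G i = G ord0 + G ord_max.
Proof. by rewrite big_ord_recl big_ord1; congr (_ + G _); apply: val_inj. Qed.

Lemma sumr_neq0_term (I : finType) (G : I -> F) : \sum_i G i != 0 -> exists i, G i != 0.
Proof.
move=> sum_neq0; apply/existsP; apply: contraR sum_neq0; rewrite negb_exists => /forallP G0.
by rewrite big1 // => i _; apply/eqP; move: (G0 i); rewrite negbK.
Qed.

Lemma mx_neq0_entry m n (A : 'M[F]_(m, n)) : A != 0 -> exists i j, A i j != 0.
Proof.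
move=> A_neq0; have : ~~ [forall i, forall j, A i j == 0].
  apply: contra A_neq0 => /forallP A0; apply/eqP/matrixP => i j; rewrite mxE.
  exact/eqP/(forallP (A0 i) j).
by move=> /forallPn [i /forallPn [j Aij]]; exists i, j.
Qed.

Lemma row_supp1 n (v : 'rV[F]_n) x0 :
  (forall y, y != x0 -> v 0 y = 0) -> v = v 0 x0 *: delta_mx 0 x0.
Proof.
move=> v_supp; apply/matrixP => i y; rewrite (ord1 i) !mxE eqxx /=.
by have [->|/v_supp ->] := eqVneq y x0; rewrite ?mulr1 ?mulr0.
Qed.

Lemma first_order_recurrence0 (V : lmodType F) (x : nat -> V) (g : F) :
  x 0%N = 0 -> (forall r, x r.+1 + g *: x r = 0) -> forall r, x r = 0.
Proof.
move=> x0 x_rec; elim=> // r IH.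
by have := x_rec r; rewrite IH scaler0 addr0.
Qed.

Lemma exists_common_null_row n m (U : 'M[F]_(m, n)) (N : nat -> 'M[F]_n)
    (deg : 'I_n -> nat) :
  (forall r x y, N r x y != 0 -> (deg x < deg y)%N) ->
  (forall r, (U *m (N r)^T <= U)%MS) -> U != 0 ->
  exists2 v : 'rV_n, (v <= U)%MS /\ v != 0 & forall r, v *m (N r)^T = 0.
Proof.
move=> N_raise U_stable U_neq0.
suff bounded B (v : 'rV_n) : (v <= U)%MS -> v != 0 ->
    (forall y, v 0 y != 0 -> (deg y < B)%N) ->
    exists2 v : 'rV_n, (v <= U)%MS /\ v != 0 & forall r, v *m (N r)^T = 0.
  have [i [j Uij]] := mx_neq0_entry U_neq0.
  apply: (bounded (\max_y deg y).+1 (row i U)); first exact: row_sub.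
    by apply: contraNneq Uij => /matrixP/(_ 0 j); rewrite !mxE => ->.
  by move=> y _; rewrite ltnS; apply: leq_bigmax.
elim: B v => [|B IH] v vU v_neq0 v_deg.
  by have [i [y]] := mx_neq0_entry v_neq0; rewrite (ord1 i) => /v_deg.
have [null|/not_all_ex_not [r vN_neq0]] := classic (forall r, v *m (N r)^T = 0).
  by exists v.
apply: (IH (v *m (N r)^T)); first exact: submx_trans (submxMr _ vU) (U_stable r).
  exact/eqP.
move=> x; rewrite mxE => /sumr_neq0_term [y]; rewrite mxE mulf_eq0 negb_or.
by case/andP => /v_deg y_lt /(N_raise r) x_lt; lia.
Qed.

End Generic.

Section WeightPoly.
Variable F : fieldType.

(* A highest weight vector of weights [s] is acted on by [t_ii(u)] as
   [(weight_poly s).[u^-1]]. *)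
Definition weight_poly (s : seq F) : {poly F} := \prod_(b <- s) (1 + b%:P * 'X).

Lemma weight_poly_cons b s : weight_poly (b :: s) = (1 + b%:P * 'X) * weight_poly s.
Proof. by rewrite /weight_poly big_cons. Qed.

Lemma coef_linear_factorM (b : F) (P : {poly F}) r :
  ((1 + b%:P * 'X) * P)`_r = P`_r + (if r is r'.+1 then b * P`_r' else 0).
Proof.
rewrite mulrDl mul1r coefD -mulrA coefCM coefXM.
by case: r => [|r] //=; rewrite mulr0.
Qed.

Lemma weight_poly_coef0 s : (weight_poly s)`_0 = 1.
Proof.
elim: s => [|b s IH]; first by rewrite /weight_poly big_nil coefC.
by rewrite weight_poly_cons coef_linear_factorM IH addr0.
Qed.

Lemma size_weight_poly s : (size (weight_poly s) <= (size s).+1)%N.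
Proof.
elim: s => [|b s IH]; first by rewrite /weight_poly big_nil size_poly1.
rewrite weight_poly_cons /=; apply: leq_trans (size_polyMleq _ _) _.
  have : (size ((1 + b%:P * 'X)%R : {poly F}) <= 2)%N.
  rewrite addrC -polyC1 size_MXaddC.
  by case: ifP => // _; rewrite ltnS size_polyC_leq1.
lia.
Qed.

Lemma weight_poly_lead s : (weight_poly s)`_(size s) = \prod_(b <- s) b.
Proof.
elim: s => [|b s IH]; first by rewrite /weight_poly !big_nil coefC.
rewrite weight_poly_cons coef_linear_factorM /= IH big_cons.
by rewrite nth_default ?add0r //; apply: size_weight_poly.
Qed.

Lemma horner_weight_poly s x : (weight_poly s).[x] = \prod_(b <- s) (1 + b * x).
Proof.
elim: s => [|b s IH]; first by rewrite /weight_poly !big_nil hornerC.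
by rewrite weight_poly_cons big_cons hornerM IH hornerD hornerC hornerMX hornerC.
Qed.

(* The recurrence says [(1 + g X) H = - kap (weight_poly s)] for the polynomial
   [H] with coefficients [h 1, h 2, ...]; evaluate at [- g^-1] (or compare
   leading coefficients when [g = 0]). *)
Lemma weight_poly_recurrence (s : seq F) (h : nat -> F) (g kap : F) :
  h 0%N = 0 -> (forall r, (size s < r)%N -> h r = 0) ->
  (forall r, h r.+1 + g * h r + kap * (weight_poly s)`_r = 0) ->
  kap = 0 \/ g \in s.
Proof.
move=> h0 h_big h_rec.
pose H : {poly F} := \poly_(r < size s) h r.+1.
have coefH r : H`_r = h r.+1.
  by rewrite coef_poly; case: ltnP => // hr; rewrite h_big.
have H_eq : (1 + g%:P * 'X) * H = - (kap *: weight_poly s).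
  apply/polyP => r; rewrite coef_linear_factorM coefN coefZ coefH.
  apply/eqP; rewrite -addr_eq0; have := h_rec r.
  by case: r => [|r]; rewrite ?h0 ?mulr0 ?addr0 ?coefH => ->.
have [-> |kap_neq0] := eqVneq kap 0; [by left | right].
have [g0|g_neq0] := eqVneq g 0.
  move/(congr1 (fun P : {poly F} => P`_(size s))): H_eq.
  rewrite g0 mul0r addr0 mul1r coefN coefZ weight_poly_lead coefH h_big // => /eqP.
  rewrite eq_sym oppr_eq0 mulf_eq0 (negPf kap_neq0) prodf_seq_eq0.
  by case/hasP => b bs /= /eqP <-.
move/(congr1 (fun P : {poly F} => P.[- g^-1])): H_eq.
rewrite hornerM hornerD hornerC hornerMX hornerC mulrN mulfV // subrr mul0r.
rewrite hornerN hornerZ horner_weight_poly => /eqP.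
rewrite eq_sym oppr_eq0 mulf_eq0 (negPf kap_neq0) prodf_seq_eq0.
case/hasP => b bs /=; rewrite mulrN subr_eq0 => /eqP b_eq.
suff -> : g = b by [].
by move/(congr1 (fun x => x * g)): b_eq; rewrite mul1r -mulrA mulVf // mulr1.
Qed.

End WeightPoly.

Section HighestWeight.
Variable F : fieldType.

Definition i1 : 'I_2 := ord0.
Definition i2 : 'I_2 := ord_max.

Lemma ord2P (i : 'I_2) : i = i1 \/ i = i2.
Proof. by case: i => [[|[|]]] // h; [left|right]; apply: val_inj. Qed.

Lemma ytfull0_offdiag (V : YRep F) i j : i != j -> ytfull V 0 i j = 0.
Proof. by move/negPf => ij; apply/matrixP => x y; rewrite /= ij !mxE mul0rn. Qed.

Lemma ytfull0_neq0 (V : YRep F) i j x y : ytfull V 0 i j x y != 0 -> x = y /\ i = j.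
Proof.
rewrite /= mxE; case: (x =P y) => [->|_]; last by rewrite mulr0n eqxx.
by case: (i =P j) => [->|_] //; rewrite mul0rn eqxx.
Qed.

(* The basis vector [x0] plays the role of [v_0 (x) ... (x) v_0] and [deg] that
   of the total index [n_1 + ... + n_k] of [v_n1 (x) ... (x) v_nk], which
   [t_ij] changes by [i - j]. *)
Record hw_data (V : YRep F) (al be : seq F) (deg : 'I_(ydim V) -> nat)
    (x0 : 'I_(ydim V)) : Prop := HwData {
  hw_size : size al = size be;
  hw_vanish : forall r i j, (size be < r)%N -> yop V r i j = 0;
  hw_grading : forall r i j x y, ytfull V r i j x y != 0 -> (deg x + j = deg y + i)%N;
  hw_deg0 : deg x0 = 0%N;
  hw_t22 : forall r x, ytfull V r i2 i2 x x0 = (x == x0)%:R * (weight_poly be)`_r;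
  hw_t11 : forall r y, ytfull V r i1 i1 x0 y = (y == x0)%:R * (weight_poly al)`_r;
  hw_singular : forall w : 'cV_(ydim V),
    (forall r, yop V r.+1 i1 i2 *m w = 0) -> forall y, y != x0 -> w y 0 = 0;
  hw_cosingular : forall phi : 'rV_(ydim V),
    (forall r, phi *m yop V r.+1 i2 i1 = 0) -> forall y, y != x0 -> phi 0 y = 0 }.

Arguments hw_data : clear implicits.

Variables (V : YRep F) (al be : seq F) (deg : 'I_(ydim V) -> nat) (x0 : 'I_(ydim V)).
Hypothesis hwV : hw_data V al be deg x0.
Local Notation hwv := (delta_mx 0 x0 : 'rV_(ydim V)).

Lemma hw_t12_raise r x y : yop V r.+1 i1 i2 x y != 0 -> (deg x < deg y)%N.
Proof. by move/(hw_grading hwV (r := r.+1)) => /=; lia. Qed.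

Lemma hw_t21_lower r x y : yop V r.+1 i2 i1 x y != 0 -> (deg y < deg x)%N.
Proof. by move/(hw_grading hwV (r := r.+1)) => /=; lia. Qed.

Lemma hw_stable_sub (U : 'M[F]_(ydim V)) :
  (forall r, (U *m (yop V r.+1 i1 i2)^T <= U)%MS) -> U != 0 ->
  (hwv <= U)%MS.
Proof.
move=> U_stable U_neq0.
have [v [vU v_neq0] v_null] :=
  exists_common_null_row (N := fun r => yop V r.+1 i1 i2) hw_t12_raise U_stable U_neq0.
have v_supp y : y != x0 -> v 0 y = 0.
  move/(hw_singular hwV (w := v^T)); rewrite mxE; apply=> r.
  by rewrite -[yop V _ _ _]trmxK -trmx_mul v_null trmx0.
have vx0_neq0 : v 0 x0 != 0.
  by apply: contraNneq v_neq0 => vx0; rewrite (row_supp1 v_supp) vx0 scale0r.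
have -> : delta_mx 0 x0 = (v 0 x0)^-1 *: v.
  by rewrite {2}(row_supp1 v_supp) scalerA mulVf ?scale1r.
exact: scalemx_sub.
Qed.

(* The annihilator [kermx U^T] of [U] is stable under the [t_21^(r) ^T]; if it
   were nonzero it would contain the covector dual to [x0], which does not
   vanish on [hwv \in U]. *)
Lemma hw_stable_full (U : 'M[F]_(ydim V)) :
  (forall r, (U *m (yop V r.+1 i2 i1)^T <= U)%MS) -> (hwv <= U)%MS -> row_full U.
Proof.
move=> U_stable x0U; apply/idPn => U_nfull.
have K_neq0 : kermx U^T != 0 by rewrite kermx_eq0 /row_free mxrank_tr.
have t21T_raise r x y : (yop V r.+1 i2 i1)^T x y != 0 -> (deg x < deg y)%N.
  by rewrite mxE => /hw_t21_lower.
have K_stable r : (kermx U^T *m ((yop V r.+1 i2 i1)^T)^T <= kermx U^T)%MS.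
  rewrite trmxK; apply/sub_kermxP; rewrite -mulmxA.
  have [M UM] := submxP (U_stable r).
  have -> : yop V r.+1 i2 i1 *m U^T = U^T *m M^T.
    by rewrite -trmx_mul -UM trmx_mul trmxK.
  by rewrite mulmxA mulmx_ker mul0mx.
have [phi [phiK phi_neq0] phi_null] :=
  exists_common_null_row (N := fun r => (yop V r.+1 i2 i1)^T) t21T_raise K_stable K_neq0.
have phi_supp : forall y, y != x0 -> phi 0 y = 0.
  by apply: (hw_cosingular hwV) => r; rewrite -[X in _ *m X]trmxK phi_null.
have [D UD] := submxP x0U.
have : phi *m hwv^T = 0.
  by rewrite UD trmx_mul mulmxA (sub_kermxP phiK) mul0mx.
rewrite trmx_delta -colE => /matrixP/(_ 0 0); rewrite !mxE => phix0.
by case/eqP: phi_neq0; rewrite (row_supp1 phi_supp) phix0 scale0r.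
Qed.

Lemma hw_data_irreducible : yirreducible V.
Proof.
split=> [|U U_stable]; first by have := ltn_ord x0; lia.
have [->|U_neq0] := eqVneq U 0; [by left | right].
apply: hw_stable_full => [r|]; first exact: U_stable.
by apply: hw_stable_sub U_neq0 => r; apply: U_stable.
Qed.

End HighestWeight.
Arguments hw_data {F} V al be deg x0.

Section TensorStep.
Variable F : fieldType.
Variables (p : nat) (a b : F).
Local Notation d := (Ldim p a b).
Local Notation L := (Lmod p a b).
Local Notation E := (glmat d a b).

Definition e12_coef (n : nat) : F := n%:R * (a - b - n%:R + 1).

Lemma glmat11E (x y : 'I_d) : E i1 i1 x y = if (y : nat) == x then a - (y : nat)%:R else 0.
Proof. by rewrite mxE /= eq_sym. Qed.

Lemma glmat22E (x y : 'I_d) : E i2 i2 x y = if (y : nat) == x then b + (y : nat)%:R else 0.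
Proof. by rewrite mxE /= eq_sym. Qed.

Lemma glmat21E (x y : 'I_d) : E i2 i1 x y = if (x : nat) == y.+1 then 1 else 0.
Proof. by rewrite mxE. Qed.

Lemma glmat12E (x y : 'I_d) : E i1 i2 x y = if (y : nat) == x.+1 then e12_coef y else 0.
Proof. by rewrite mxE. Qed.

Lemma glmat_grading i j (x y : 'I_d) : E i j x y != 0 -> ((x : nat) + j = y + i)%N.
Proof.
case: (ord2P i) => ->; case: (ord2P j) => ->;
  rewrite ?glmat11E ?glmat22E ?glmat21E ?glmat12E /=;
  by case: ifP => [/eqP|]; rewrite ?eqxx //; lia.
Qed.

Lemma sum_glmat_select (f : 'I_d -> F) (c : nat -> F) n :
  \sum_(m < d) (if (m : nat) == n then c (m : nat) else 0) * f m =
  c n * \sum_(m < d | (m : nat) == n) f m.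
Proof.
rewrite [in RHS]big_mkcond mulr_sumr; apply: eq_bigr => m _.
by case: eqP => [->|]; rewrite ?mul0r ?mulr0.
Qed.

Variable W : YRep F.

Lemma ytens_LmodE r i j x1 x2 y1 y2 :
  ytfull (ytens L W) r.+1 i j (mxtens_index (x1, x2)) (mxtens_index (y1, y2)) =
  (x1 == y1)%:R * ytfull W r.+1 i j x2 y2 + \sum_(c < 2) E i c x1 y1 * ytfull W r c j x2 y2.
Proof.
rewrite /= summxE (eq_bigr (fun c : 'I_2 => (i == c)%:R * (x1 == y1)%:R *
    ytfull W r.+1 c j x2 y2 + E i c x1 y1 * ytfull W r c j x2 y2)) => [|c _].
  rewrite big_split /= (bigD1 i) //= big1 ?addr0 ?eqxx ?mul1r // => c.
  by rewrite eq_sym => /negPf ->; rewrite !mul0r.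
rewrite summxE !big_ord_recl big1 ?addr0 => [|s _]; last by rewrite /= tens0mx mxE.
by rewrite !tensmxE /= subn0 subn1 mxE mulr_natr.
Qed.

Variables (al be : seq F) (degW : 'I_(ydim W) -> nat) (x0W : 'I_(ydim W)).
Hypothesis hwW : hw_data W al be degW x0W.
Hypothesis d_gt0 : (0 < d)%N.
Local Notation v0 := (Ordinal d_gt0).
Local Notation x0 := (mxtens_index (v0, x0W)).

Definition tens_deg (k : 'I_(d * ydim W)) : nat :=
  ((mxtens_unindex k).1 : nat) + degW (mxtens_unindex k).2.

Lemma hw_t12_x0 r x : ytfull W r i1 i2 x x0W = 0.
Proof.
by apply/eqP; apply: contraT => /(hw_grading hwW); rewrite (hw_deg0 hwW) /=; lia.
Qed.

Lemma hw_t21_x0 r y : ytfull W r i2 i1 x0W y = 0.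
Proof.
by apply/eqP; apply: contraT => /(hw_grading hwW); rewrite (hw_deg0 hwW) /=; lia.
Qed.

Lemma hw_ytfull_vanish r i j : (size be < r)%N -> ytfull W r i j = 0.
Proof. by case: r => // r; apply: (hw_vanish hwW). Qed.

Lemma tens_vanish r i j : (size (b :: be) < r)%N -> yop (ytens L W) r i j = 0.
Proof.
move=> r_big /=; apply: big1 => c _; apply: big1 => -[[|[|s]] hs] _ /=.
- by rewrite hw_ytfull_vanish ?tensmx0 //=; move: r_big => /=; lia.
- by rewrite hw_ytfull_vanish ?tensmx0 //=; move: r_big => /=; lia.
- by rewrite tens0mx.
Qed.

Lemma tens_grading r i j x y :
  ytfull (ytens L W) r i j x y != 0 -> (tens_deg x + j = tens_deg y + i)%N.
Proof.
case: r => [|r]; first by case/ytfull0_neq0 => -> ->.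
case: (mxtens_indexP x) => x1 x2; case: (mxtens_indexP y) => y1 y2.
rewrite ytens_LmodE /tens_deg !mxtens_indexK /=.
have [t0|] := eqVneq ((x1 == y1)%:R * ytfull W r.+1 i j x2 y2) 0; last first.
  case: (x1 =P y1) => [->|_]; last by rewrite mul0r eqxx.
  by rewrite mul1r => /(hw_grading hwW) ? _; lia.
rewrite t0 add0r => /sumr_neq0_term [c]; rewrite mulf_eq0 negb_or.
by case/andP => /glmat_grading ? /(hw_grading hwW); lia.
Qed.

Lemma tens_t22 r x :
  ytfull (ytens L W) r i2 i2 x x0 = (x == x0)%:R * (weight_poly (b :: be))`_r.
Proof.
case: r => [|r]; first by rewrite /= mxE weight_poly_coef0 mulr1.
case: (mxtens_indexP x) => x1 x2.
rewrite ytens_LmodE big_ord2 hw_t12_x0 mulr0 add0r weight_poly_cons coef_linear_factorM.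
rewrite (inj_eq (can_inj (@mxtens_indexK _ _))) xpair_eqE !(hw_t22 hwW) glmat22E /=.
case: (x1 =P v0) => [->|/eqP x1_neq] /=; first by ring.
rewrite ifN ?mul0r ?addr0 //; apply: contra x1_neq => /eqP x1_0.
by apply/eqP/val_inj.
Qed.

Lemma tens_t11 r y :
  ytfull (ytens L W) r i1 i1 x0 y = (y == x0)%:R * (weight_poly (a :: al))`_r.
Proof.
case: r => [|r]; first by rewrite /= mxE weight_poly_coef0 mulr1 eq_sym.
case: (mxtens_indexP y) => y1 y2.
rewrite ytens_LmodE big_ord2 hw_t21_x0 mulr0 addr0 weight_poly_cons coef_linear_factorM.
rewrite (inj_eq (can_inj (@mxtens_indexK _ _))) xpair_eqE !(hw_t11 hwW) glmat11E /=.
case: (y1 =P v0) => [->|/eqP y1_neq] /=; first by ring.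
by rewrite eq_sym (negPf y1_neq) ifN ?mul0r ?addr0.
Qed.

Hypothesis e12_coef_neq0 : forall m, (0 < m < d)%N -> e12_coef m != 0.
Hypothesis a_string_avoid : forall m, (m.+1 < d)%N -> a - m%:R \notin be.
Hypothesis b_string_avoid : forall m, (m.+1 < d)%N -> b + m%:R \notin al.

Section Singular.
Variable w : 'cV[F]_(d * ydim W).

(* The component [w_n] of [w = \sum_n v_n (x) w_n], with [w_n = 0] for [n >= d]. *)
Definition wcomp (n : nat) : 'cV_(ydim W) :=
  \col_y \sum_(m < d | (m : nat) == n) w (mxtens_index (m, y)) 0.

Lemma wcomp_out n : (d <= n)%N -> wcomp n = 0.
Proof.
move=> d_le; apply/matrixP => y j; rewrite !mxE big_pred0 // => m.
by apply/negbTE; rewrite neq_ltn (leq_trans (ltn_ord m) d_le).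
Qed.

Lemma wcompE (m : 'I_d) y : wcomp m y 0 = w (mxtens_index (m, y)) 0.
Proof. by rewrite mxE (big_pred1 m). Qed.

Lemma sum_t12_comp (m' : 'I_d) (A B C : F) (f : 'I_d -> F) :
  \sum_(m < d) ((m' == m)%:R * A + (E i1 i1 m' m * B + E i1 i2 m' m * C)) * f m =
  A * \sum_(m < d | (m : nat) == m') f m
  + (a - (m' : nat)%:R) * (B * \sum_(m < d | (m : nat) == m') f m)
  + e12_coef m'.+1 * (C * \sum_(m < d | (m : nat) == m'.+1) f m).
Proof.
rewrite (eq_bigr (fun m : 'I_d =>
   (if (m : nat) == m' then A else 0) * f m +
   (if (m : nat) == m' then (a - (m : nat)%:R) * B else 0) * f m +
   (if (m : nat) == m'.+1 then e12_coef m * C else 0) * f m)) => [|m _]; last first.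
  rewrite glmat11E glmat12E [m' == m]eq_sym -[m == m']/((m : nat) == m').
  by case: eqP => _; case: eqP => _ /=; ring.
rewrite !big_split /= (sum_glmat_select _ (fun _ => A)).
rewrite (sum_glmat_select _ (fun n => (a - n%:R) * B)).
by rewrite (sum_glmat_select _ (fun n => e12_coef n * C)); ring.
Qed.

Lemma tens_t12E r (m' : 'I_d) y' :
  (yop (ytens L W) r.+1 i1 i2 *m w) (mxtens_index (m', y')) 0 =
  (ytfull W r.+1 i1 i2 *m wcomp m') y' 0
  + (a - (m' : nat)%:R) * (ytfull W r i1 i2 *m wcomp m') y' 0
  + e12_coef m'.+1 * (ytfull W r i2 i2 *m wcomp m'.+1) y' 0.
Proof.
rewrite mxE sum_mxtens_index exchange_big.
rewrite (eq_bigr (fun y => ytfull W r.+1 i1 i2 y' y * wcomp m' y 0 +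
   (a - (m' : nat)%:R) * (ytfull W r i1 i2 y' y * wcomp m' y 0) +
   e12_coef m'.+1 * (ytfull W r i2 i2 y' y * wcomp m'.+1 y 0))) => [|y _].
  by rewrite !big_split /= !mxE -!mulr_sumr.
under eq_bigr do rewrite -[yop _ _ _ _]/(ytfull _ r.+1 _ _) ytens_LmodE big_ord2.
by rewrite sum_t12_comp !mxE.
Qed.

Hypothesis w_singular : forall r, yop (ytens L W) r.+1 i1 i2 *m w = 0.

Lemma wcomp_recurrenceE r (m : 'I_d) y :
  (ytfull W r.+1 i1 i2 *m wcomp m) y 0 + (a - (m : nat)%:R) * (ytfull W r i1 i2 *m wcomp m) y 0
  + e12_coef m.+1 * (ytfull W r i2 i2 *m wcomp m.+1) y 0 = 0.
Proof. by rewrite -tens_t12E w_singular mxE. Qed.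

Lemma wcomp_recurrence r (m : 'I_d) :
  ytfull W r.+1 i1 i2 *m wcomp m + (a - (m : nat)%:R) *: (ytfull W r i1 i2 *m wcomp m)
  + e12_coef m.+1 *: (ytfull W r i2 i2 *m wcomp m.+1) = 0.
Proof.
apply/matrixP => y j; rewrite (ord1 j).
by move: (wcomp_recurrenceE r m y); rewrite !mxE.
Qed.

Lemma wcomp_supp n : (n < d)%N -> wcomp n.+1 = 0 -> forall y, y != x0W -> wcomp n y 0 = 0.
Proof.
move=> n_lt wcompS0; apply: (hw_singular hwW) => r.
suff t12_null : forall r, ytfull W r i1 i2 *m wcomp n = 0 by apply: t12_null r.+1.
apply: (first_order_recurrence0 (g := a - n%:R)) => [|{}r].
  by rewrite ytfull0_offdiag ?mul0mx.
by have := wcomp_recurrence r (Ordinal n_lt); rewrite wcompS0 mulmx0 scaler0 addr0.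
Qed.

Lemma wcomp_descent n : (0 < n < d)%N -> wcomp n.+1 = 0 -> wcomp n = 0.
Proof.
case/andP=> n_gt0 n_lt /(wcomp_supp n_lt) wcomp_supp_n.
have n1_lt : (n.-1 < d)%N by lia.
have t22_wcomp r : (ytfull W r i2 i2 *m wcomp n) x0W 0 = (weight_poly be)`_r * wcomp n x0W 0.
  rewrite mxE (bigD1 x0W) //= big1 ?addr0 => [|y y_neq]; last by rewrite wcomp_supp_n ?mulr0.
  by rewrite (hw_t22 hwW) eqxx mul1r.
have := @weight_poly_recurrence _ be (fun r => (ytfull W r i1 i2 *m wcomp n.-1) x0W 0)
  (a - n.-1%:R) (e12_coef n * wcomp n x0W 0).
case=> [||r|/eqP|be_in].
- by rewrite ytfull0_offdiag ?mul0mx ?mxE.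
- by move=> r r_big; rewrite hw_ytfull_vanish ?mul0mx ?mxE.
- have := wcomp_recurrenceE r (Ordinal n1_lt) x0W.
  by rewrite /= (prednK n_gt0) t22_wcomp => rec; rewrite -[RHS]rec; ring.
- rewrite mulf_eq0 (negPf (e12_coef_neq0 _)) ?n_gt0 // => /eqP wcomp_x0.
  apply/matrixP => y j; rewrite (ord1 j) [RHS]mxE.
  by have [->|/wcomp_supp_n] := eqVneq y x0W.
- by have := a_string_avoid (m := n.-1); rewrite (prednK n_gt0) be_in => /(_ n_lt).
Qed.

Lemma wcomp_gt0 n : (0 < n)%N -> wcomp n = 0.
Proof.
move: n; apply: (nat_down_ind (d := d)) => [n /wcomp_out // | n n_lt wcompS n_gt0].
by apply: wcomp_descent; [rewrite n_gt0 | apply: wcompS].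
Qed.

Lemma tens_singular k : k != x0 -> w k 0 = 0.
Proof.
case: (mxtens_indexP k) => m y k_neq; rewrite -wcompE.
have [m0|m_gt0] := posnP m; last by rewrite wcomp_gt0 ?mxE.
have m_v0 : m = v0 by apply: val_inj.
rewrite m0 (wcomp_supp d_gt0 (wcomp_gt0 _)) //.
by apply: contraNneq k_neq => ->; rewrite m_v0.
Qed.

End Singular.

Section Cosingular.
Variable phi : 'rV[F]_(d * ydim W).

Definition pcomp (n : nat) : 'rV_(ydim W) :=
  \row_y \sum_(m < d | (m : nat) == n) phi 0 (mxtens_index (m, y)).

Lemma pcomp_out n : (d <= n)%N -> pcomp n = 0.
Proof.
move=> d_le; apply/matrixP => j y; rewrite !mxE big_pred0 // => m.
by apply/negbTE; rewrite neq_ltn (leq_trans (ltn_ord m) d_le).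
Qed.

Lemma pcompE (m : 'I_d) y : pcomp m 0 y = phi 0 (mxtens_index (m, y)).
Proof. by rewrite mxE (big_pred1 m). Qed.

Lemma sum_t21_comp (m : 'I_d) (A B C : F) (f : 'I_d -> F) :
  \sum_(m' < d) f m' * ((m' == m)%:R * A + (E i2 i1 m' m * B + E i2 i2 m' m * C)) =
  A * \sum_(m' < d | (m' : nat) == m) f m' + B * \sum_(m' < d | (m' : nat) == m.+1) f m'
  + (b + (m : nat)%:R) * (C * \sum_(m' < d | (m' : nat) == m) f m').
Proof.
rewrite (eq_bigr (fun m' : 'I_d =>
   (if (m' : nat) == m then A else 0) * f m' +
   (if (m' : nat) == m.+1 then B else 0) * f m' +
   (if (m' : nat) == m then (b + (m : nat)%:R) * C else 0) * f m')) => [|m' _]; last first.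
  rewrite glmat21E glmat22E [(m : nat) == m']eq_sym -[m' == m]/((m' : nat) == m).
  by case: eqP => _; case: eqP => _ /=; ring.
rewrite !big_split /= (sum_glmat_select _ (fun _ => A)) (sum_glmat_select _ (fun _ => B)).
by rewrite (sum_glmat_select _ (fun _ => (b + (m : nat)%:R) * C)); ring.
Qed.

Lemma tens_t21E r (m : 'I_d) y :
  (phi *m yop (ytens L W) r.+1 i2 i1) 0 (mxtens_index (m, y)) =
  (pcomp m *m ytfull W r.+1 i2 i1) 0 y + (pcomp m.+1 *m ytfull W r i1 i1) 0 y
  + (b + (m : nat)%:R) * (pcomp m *m ytfull W r i2 i1) 0 y.
Proof.
rewrite mxE sum_mxtens_index exchange_big.
rewrite (eq_bigr (fun y' => pcomp m 0 y' * ytfull W r.+1 i2 i1 y' y +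
   pcomp m.+1 0 y' * ytfull W r i1 i1 y' y +
   (b + (m : nat)%:R) * (pcomp m 0 y' * ytfull W r i2 i1 y' y))) => [|y' _].
  by rewrite !big_split /= !mxE -!mulr_sumr.
under eq_bigr do rewrite -[yop _ _ _ _]/(ytfull _ r.+1 _ _) ytens_LmodE big_ord2.
by rewrite sum_t21_comp !mxE; ring.
Qed.

Hypothesis phi_cosingular : forall r, phi *m yop (ytens L W) r.+1 i2 i1 = 0.

Lemma pcomp_recurrenceE r (m : 'I_d) y :
  (pcomp m *m ytfull W r.+1 i2 i1) 0 y + (pcomp m.+1 *m ytfull W r i1 i1) 0 y
  + (b + (m : nat)%:R) * (pcomp m *m ytfull W r i2 i1) 0 y = 0.
Proof. by rewrite -tens_t21E phi_cosingular mxE. Qed.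

Lemma pcomp_recurrence r (m : 'I_d) :
  pcomp m *m ytfull W r.+1 i2 i1 + pcomp m.+1 *m ytfull W r i1 i1
  + (b + (m : nat)%:R) *: (pcomp m *m ytfull W r i2 i1) = 0.
Proof.
apply/matrixP => j y; rewrite (ord1 j).
by move: (pcomp_recurrenceE r m y); rewrite !mxE.
Qed.

Lemma pcomp_supp n : (n < d)%N -> pcomp n.+1 = 0 -> forall y, y != x0W -> pcomp n 0 y = 0.
Proof.
move=> n_lt pcompS0; apply: (hw_cosingular hwW) => r.
suff t21_null : forall r, pcomp n *m ytfull W r i2 i1 = 0 by apply: t21_null r.+1.
apply: (first_order_recurrence0 (g := b + n%:R)) => [|{}r].
  by rewrite ytfull0_offdiag ?mulmx0.
by have := pcomp_recurrence r (Ordinal n_lt); rewrite pcompS0 mul0mx addr0.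
Qed.

Lemma pcomp_descent n : (0 < n < d)%N -> pcomp n.+1 = 0 -> pcomp n = 0.
Proof.
case/andP=> n_gt0 n_lt /(pcomp_supp n_lt) pcomp_supp_n.
have n1_lt : (n.-1 < d)%N by lia.
have t11_pcomp r : (pcomp n *m ytfull W r i1 i1) 0 x0W = pcomp n 0 x0W * (weight_poly al)`_r.
  rewrite mxE (bigD1 x0W) //= big1 ?addr0 => [|y y_neq]; last by rewrite pcomp_supp_n ?mul0r.
  by rewrite (hw_t11 hwW) eqxx mul1r.
have := @weight_poly_recurrence _ al (fun r => (pcomp n.-1 *m ytfull W r i2 i1) 0 x0W)
  (b + n.-1%:R) (pcomp n 0 x0W).
case=> [||r|pcomp_x0|al_in].
- by rewrite ytfull0_offdiag ?mulmx0 ?mxE.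
- by move=> r; rewrite (hw_size hwW) => r_big; rewrite hw_ytfull_vanish ?mulmx0 ?mxE.
- have := pcomp_recurrenceE r (Ordinal n1_lt) x0W.
  by rewrite /= (prednK n_gt0) t11_pcomp => rec; rewrite -[RHS]rec; ring.
- apply/matrixP => j y; rewrite (ord1 j) [RHS]mxE.
  by have [->|/pcomp_supp_n] := eqVneq y x0W.
- by have := b_string_avoid (m := n.-1); rewrite (prednK n_gt0) al_in => /(_ n_lt).
Qed.

Lemma pcomp_gt0 n : (0 < n)%N -> pcomp n = 0.
Proof.
move: n; apply: (nat_down_ind (d := d)) => [n /pcomp_out // | n n_lt pcompS n_gt0].
by apply: pcomp_descent; [rewrite n_gt0 | apply: pcompS].
Qed.

Lemma tens_cosingular k : k != x0 -> phi 0 k = 0.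
Proof.
case: (mxtens_indexP k) => m y k_neq; rewrite -pcompE.
have [m0|m_gt0] := posnP m; last by rewrite pcomp_gt0 ?mxE.
have m_v0 : m = v0 by apply: val_inj.
rewrite m0 (pcomp_supp d_gt0 (pcomp_gt0 _)) //.
by apply: contraNneq k_neq => ->; rewrite m_v0.
Qed.

End Cosingular.

Lemma tens_hw_data : hw_data (ytens L W) (a :: al) (b :: be) tens_deg x0.
Proof.
split.
- by rewrite /= (hw_size hwW).
- exact: tens_vanish.
- exact: tens_grading.
- by rewrite /tens_deg mxtens_indexK /= (hw_deg0 hwW).
- exact: tens_t22.
- exact: tens_t11.
- exact: tens_singular.
- exact: tens_cosingular.
Qed.

End TensorStep.

Section PrimeField.
Variable F : fieldType.
Variable p : nat.

Lemma in_Fp_natr (x : F) n : (n < p)%N -> x = n%:R -> in_Fp p x /\ (Fp_rep p x <= n)%N.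
Proof.
move=> n_lt ->; have n_in : in_Fp p (n%:R : F).
  by apply/hasP; exists n; rewrite ?mem_iota //=; lia.
split=> //; rewrite leqNgt; apply/negP => /(before_find 0%N).
by rewrite nth_iota //= add0n eqxx.
Qed.

Lemma Fp_repK (x : F) : in_Fp p x -> (Fp_rep p x < p)%N /\ (Fp_rep p x)%:R = x.
Proof.
move=> x_in; have rep_lt : (Fp_rep p x < p)%N by move: x_in; rewrite /in_Fp has_find size_iota.
by split=> //; have := nth_find 0%N x_in; rewrite nth_iota // add0n => /eqP.
Qed.

Lemma Ldim_le (a b : F) : (Ldim p a b <= p)%N.
Proof. by rewrite /Ldim; case: ifP => // /Fp_repK []. Qed.

(* [a - m] and [b + m], [m < d - 1], are the [E_11]- and [E_22]-weights of
   [v_m] in [L(a, b)] that a later [b'], resp. [a'], must avoid. *)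
Definition strings_avoid (x y : F * F) : bool :=
  all (fun m : nat => (x.1 - m%:R != y.2) && (x.2 + m%:R != y.1))
      (iota 0 (Ldim p x.1 x.2).-1).

Lemma strings_avoid_of_min (a b a' b' : F) :
  (forall x, in_Fp p x -> x = a - b' \/ x = a' - b ->
     in_Fp p (a - b) /\ (Fp_rep p (a - b) <= Fp_rep p x)%N) ->
  strings_avoid (a, b) (a', b').
Proof.
move=> rep_min; apply/allP => m; rewrite mem_iota add0n /= => m_lt.
have m_ltp : (m < p)%N by have := Ldim_le a b; lia.
have not_natr x : x = a - b' \/ x = a' - b -> x != m%:R.
  move=> x_diff; apply/eqP => x_m.
  have [x_in x_rep] := in_Fp_natr m_ltp x_m.
  have [ab_in ab_le] := rep_min x x_in x_diff.
  by move: m_lt; rewrite /Ldim ab_in /=; lia.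
apply/andP; split.
- by apply: contraNneq (not_natr _ (or_introl erefl)) => <-; apply/eqP; ring.
- by apply: contraNneq (not_natr _ (or_intror erefl)) => <-; apply/eqP; ring.
Qed.

Hypothesis p_prime : prime p.
Hypothesis p_char : p \in [pchar F].

Lemma natr_neq0_lt_char n : (0 < n < p)%N -> (n%:R : F) != 0.
Proof.
case/andP=> n_gt0 n_lt; rewrite -(dvdn_pcharf p_char).
by apply/negP => /(dvdn_leq n_gt0); lia.
Qed.

Lemma Ldim_gt0 (a b : F) : (0 < Ldim p a b)%N.
Proof. by rewrite /Ldim; case: ifP => // _; apply: prime_gt0. Qed.

Lemma e12_coef_neq0 (a b : F) m : (0 < m < Ldim p a b)%N -> e12_coef a b m != 0.
Proof.
move=> m_range; have m_lt : (m < p)%N by have := Ldim_le a b; lia.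
rewrite /e12_coef mulf_neq0 //; first by apply: natr_neq0_lt_char; lia.
move: m_range; rewrite /Ldim; case: ifP => ab_in m_range.
  have [rep_lt rep_eq] := Fp_repK ab_in.
  have -> : a - b - m%:R + 1 = (Fp_rep p (a - b) - m).+1%:R.
    by rewrite -addn1 natrD natrB ?rep_eq //; lia.
  by apply: natr_neq0_lt_char; lia.
apply/negP => /eqP e.
have : a - b = m.-1%:R.
  rewrite -[m in m%:R](@prednK m) ?(andP m_range).1 // -addn1 natrD in e.
  by apply/eqP; rewrite -subr_eq0 -e; apply/eqP; ring.
by case/(in_Fp_natr _ (n := m.-1)); [lia | rewrite ab_in].
Qed.

Lemma pairwise_strings_avoid k (alpha beta : 'I_k -> F) :
  (forall i : 'I_k,
     (in_Fp p (alpha i - beta i) /\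
      forall j l : 'I_k, (i <= j)%N -> (i <= l)%N -> in_Fp p (alpha j - beta l) ->
        (Fp_rep p (alpha i - beta i) <= Fp_rep p (alpha j - beta l))%N)
     \/
     (forall j l : 'I_k, (i <= j)%N -> (i <= l)%N -> ~~ in_Fp p (alpha j - beta l))) ->
  pairwise strings_avoid [seq (alpha i, beta i) | i <- enum 'I_k].
Proof.
move=> hyp; rewrite pairwise_map; apply: pairwise_enum_ord => i l /ltnW il /=.
apply: strings_avoid_of_min => x x_in x_eq.
case: (hyp i) => [[ii_in ii_min] | none].
  by split=> //; case: x_eq x_in => -> x_in; apply: ii_min.
case: x_eq x_in => -> x_in;
  [move: (none i l (leqnn i) il) | move: (none l i il (leqnn i))]; by rewrite x_in.
Qed.

End PrimeField.

Section TensorChain.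
Variable F : fieldType.
Variable p : nat.
Hypothesis p_prime : prime p.
Hypothesis p_char : p \in [pchar F].

Lemma ytriv_hw_data : hw_data (ytriv F) [::] [::] (fun _ => 0%N) ord0.
Proof.
split=> //.
- move=> [|r] i j x y; first by case/ytfull0_neq0 => _ ->.
  by rewrite /= mxE eqxx.
- by move=> [|r] x; rewrite (ord1 x) /weight_poly big_nil coefC /= mxE ?eqxx ?mulr1 ?mulr0.
- by move=> [|r] y; rewrite (ord1 y) /weight_poly big_nil coefC /= mxE ?eqxx ?mulr1 ?mulr0.
- by move=> w _ y; rewrite (ord1 y) eqxx.
- by move=> w _ y; rewrite (ord1 y) eqxx.
Qed.

Lemma hw_data_tensor (ab : seq (F * F)) : pairwise (strings_avoid p) ab ->
  exists deg x0, hw_data (foldr (@ytens F) (ytriv F) [seq Lmod p x.1 x.2 | x <- ab])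
                         (unzip1 ab) (unzip2 ab) deg x0.
Proof.
elim: ab => [_|[a b] ab IH]; first by exists (fun _ => 0%N), ord0; apply: ytriv_hw_data.
rewrite pairwise_cons => /andP [/allP avoid /IH [deg [x0 hw]]].
have string_avoid m : (m.+1 < Ldim p a b)%N -> forall y, y \in ab ->
    (a - m%:R != y.2) && (b + m%:R != y.1).
  by move=> m_lt y /avoid /allP; apply; rewrite mem_iota /=; lia.
eexists; eexists; apply: (tens_hw_data hw (Ldim_gt0 p_prime a b)).
- exact: e12_coef_neq0.
- move=> m m_lt; apply/mapP => -[y y_in e].
  by have /andP [] := string_avoid m m_lt y y_in; rewrite e eqxx.
- move=> m m_lt; apply/mapP => -[y y_in e].
  by have /andP [_] := string_avoid m m_lt y y_in; rewrite e eqxx.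
Qed.

End TensorChain.

Theorem proposition3p2p3 (F : closedFieldType) (p : nat) (hp : prime p)
  (hchar : p \in [pchar F])
  (halg : forall x : F, exists n : nat, (0 < n)%N /\ x ^+ (p ^ n) = x)
  (k : nat) (alpha beta : 'I_k -> F) :
  (forall i : 'I_k,
     (in_Fp p (alpha i - beta i) /\
      forall j l : 'I_k, (i <= j)%N -> (i <= l)%N -> in_Fp p (alpha j - beta l) ->
        (Fp_rep p (alpha i - beta i) <= Fp_rep p (alpha j - beta l))%N)
     \/
     (forall j l : 'I_k, (i <= j)%N -> (i <= l)%N -> ~~ in_Fp p (alpha j - beta l))) ->
  yirreducible (Ltensor p alpha beta).
Proof.
move=> hyp; have [deg [x0 hw]] := hw_data_tensor hp hchar (pairwise_strings_avoid hyp).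
suff -> : Ltensor p alpha beta = foldr (@ytens F) (ytriv F)
    [seq Lmod p x.1 x.2 | x <- [seq (alpha i, beta i) | i <- enum 'I_k]].
  exact: hw_data_irreducible hw.
by rewrite /Ltensor; elim: (enum _) => //= i s ->.
Qed.
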